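(* Let $p\ge 1$, $n_0,n_1\ge 1$, let $\bm{X}_0$ ($n_0\times p$) and $\bm{X}_1$ ($n_1\times p$) be fixed design matrices of full column rank, let $\sigma_0,\sigma_1>0$ be known, and let $0<a_0\le 1$. Suppose the historical responses satisfy $\bm{Y}_0\sim N_{n_0}(\bm{X}_0\bm{\beta}_0,\sigma_0^2\bm{I}_{n_0})$ and the current responses satisfy $\bm{Y}_1\sim N_{n_1}(\bm{X}_1\bm{\beta}_1,\sigma_1^2\bm{I}_{n_1})$, independently, where the parameters satisfy the scale-transformation relation $\bm{\beta}_0=(\sigma_0/\sigma_1)\bm{\beta}_1$. Define the straPP posterior mean and power-prior posterior mean $$\widehat{\bm{\beta}}_s=\bm{\Sigma}_s\Big\{\tfrac{1}{\sigma_1^2}\bm{X}_1^T\bm{Y}_1+\tfrac{a_0}{\sigma_0\sigma_1}\bm{X}_0^T\bm{Y}_0\Big\},\quad \bm{\Sigma}_s=\sigma_1^2(\bm{X}_1^T\bm{X}_1+a_0\bm{X}_0^T\bm{X}_0)^{-1},$$ $$\widehat{\bm{\beta}}_p=\bm{\Sigma}_p\Big\{\tfrac{1}{\sigma_1^2}\bm{X}_1^T\bm{Y}_1+\tfrac{a_0}{\sigma_0^2}\bm{X}_0^T\bm{Y}_0\Big\},\quad \bm{\Sigma}_p=\Big\{\tfrac{1}{\sigma_1^2}\bm{X}_1^T\bm{X}_1+\tfrac{a_0}{\sigma_0^2}\bm{X}_0^T\bm{X}_0\Big\}^{-1}.$$ For $j\in\{0,\dots,p-1\}$ let $\beta_{1j}$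 be the $(j+1)$th entry of $\bm{\beta}_1$ and $\hat\beta_{s,1j},\hat\beta_{p,1j}$ the $(j+1)$th entries of $\widehat{\bm{\beta}}_s,\widehat{\bm{\beta}}_p$. Assume $\beta_{1j}\neq 0$ and $\mathrm{Bias}(\hat\beta_{p,1j})\neq 0$. Then $$\frac{\mathrm{Var}(\hat\beta_{s,1j})-\mathrm{Var}(\hat\beta_{p,1j})}{\big[\mathrm{PercentBias}(\hat\beta_{p,1j})\big]^2}\le \beta_{1j}^2$$ implies $\mathrm{MSE}(\hat\beta_{s,1j})\le \mathrm{MSE}(\hat\beta_{p,1j})$.
   Context: All variances, biases and MSEs are frequentist, taken over the sampling distribution of $(\bm{Y}_0,\bm{Y}_1)$ with designs fixed: $\mathrm{Bias}(\hat\beta)=E(\hat\beta)-\beta_{1j}$, $\mathrm{MSE}=\mathrm{Var}+\mathrm{Bias}^2$, and $\mathrm{PercentBias}(\hat\beta_{p,1j})=\mathrm{Bias}(\hat\beta_{p,1j})/\beta_{1j}$. The two estimators are the posterior means of $\bm{\beta}_1$ under a uniform improper initial prior combined with, respectively, the scale transformed power prior $\bm{\beta}_1\sim N\big((\sigma_1/\sigma_0)(\bm{X}_0^T\bm{X}_0)^{-1}\bm{X}_0^T\bm{Y}_0,\ (\sigma_1^2/a_0)(\bm{X}_0^T\bm{X}_0)^{-1}\big)$ and the power prior $\bm{\beta}_1\sim N\big((\bm{X}_0^T\bm{X}_0)^{-1}\bm{X}_0^T\bm{Y}_0,\ (\sigma_0^2/a_0)(\bm{X}_0^T\bm{X}_0)^{-1}\big)$,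 with current-data likelihood $N(\bm{X}_1\bm{\beta}_1,\sigma_1^2\bm{I})$. *)

From HB Require Import structures.
From mathcomp Require Import all_boot all_order all_algebra.
From mathcomp Require Import all_classical all_reals all_analysis.
Set Implicit Arguments. Unset Strict Implicit. Unset Printing Implicit Defensive.
Import Order.TTheory GRing.Theory Num.Theory.
Local Open Scope classical_set_scope.
Local Open Scope ring_scope.

(* Mutual independence of a finite family of real random variables:
   the joint law of (X i)_i is the product of the marginals on every
   product of Borel sets (probabilities are finite, so we compare them in R). *)
Definition mutually_independent {d} {T : measurableType d} {R : realType}
  (P : probability T R) (I : finType) (X : I -> T -> R) : Prop :=
  forall B : I -> set R, (forall i, measurable (B i)) ->
    fine (P [set w | forall i, B i (X i w)]) =
    \prod_(i : I) fine (P (X i @^-1` B i)).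

Definition colRV {T : Type} {R : realType} (n : nat) (Y : 'I_n -> T -> R) (w : T)
  : 'cV[R]_n := \col_i Y i w.

Definition Sigma_s {R : realType} (p n0 n1 : nat) (X0 : 'M[R]_(n0, p))
  (X1 : 'M[R]_(n1, p)) (s1 a0 : R) : 'M[R]_p :=
  (s1 ^+ 2) *: invmx (X1^T *m X1 + a0 *: (X0^T *m X0)).

Definition beta_s {R : realType} (p n0 n1 : nat) (X0 : 'M[R]_(n0, p))
  (X1 : 'M[R]_(n1, p)) (s0 s1 a0 : R) (y0 : 'cV[R]_n0) (y1 : 'cV[R]_n1)
  : 'cV[R]_p :=
  Sigma_s X0 X1 s1 a0 *m
    ((s1 ^+ 2)^-1 *: (X1^T *m y1) + (a0 / (s0 * s1)) *: (X0^T *m y0)).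

Definition Sigma_p {R : realType} (p n0 n1 : nat) (X0 : 'M[R]_(n0, p))
  (X1 : 'M[R]_(n1, p)) (s0 s1 a0 : R) : 'M[R]_p :=
  invmx ((s1 ^+ 2)^-1 *: (X1^T *m X1) + (a0 / s0 ^+ 2) *: (X0^T *m X0)).

Definition beta_p {R : realType} (p n0 n1 : nat) (X0 : 'M[R]_(n0, p))
  (X1 : 'M[R]_(n1, p)) (s0 s1 a0 : R) (y0 : 'cV[R]_n0) (y1 : 'cV[R]_n1)
  : 'cV[R]_p :=
  Sigma_p X0 X1 s0 s1 a0 *m
    ((s1 ^+ 2)^-1 *: (X1^T *m y1) + (a0 / s0 ^+ 2) *: (X0^T *m y0)).

Definition Bias {d} {T : measurableType d} {R : realType}
  (P : probability T R) (est : T -> R) (b : R) : R :=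
  fine ('E_P[est]) - b.

Definition Var {d} {T : measurableType d} {R : realType}
  (P : probability T R) (est : T -> R) : R :=
  fine ('V_P[est]).

Definition MSE {d} {T : measurableType d} {R : realType}
  (P : probability T R) (est : T -> R) (b : R) : R :=
  Var P est + Bias P est b ^+ 2.

Definition PercentBias {d} {T : measurableType d} {R : realType}
  (P : probability T R) (est : T -> R) (b : R) : R :=
  Bias P est b / b.

From HB Require Import structures.
From mathcomp Require Import all_boot all_order all_algebra.
From mathcomp Require Import all_classical all_reals all_analysis.
From mathcomp Require Import measurable_realfun.
From mathcomp Require Import ring lra.
Import numFieldNormedType.Exports.
Import Order.TTheory GRing.Theory Num.Theory.
Local Open Scope classical_set_scope.
Local Open Scope ring_scope.

(* Under beta0 = (sigma0 / sigma1) beta1 the straPP posterior mean is unbiased: it is linear in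
   the responses, so its mean is obtained by plugging in X0 beta0 and X1 beta1, which gives
   Sigma_s (X1^T X1 + a0 X0^T X0) beta1 / sigma1^2 = beta1.  Hence MSE(bs) = Var(bs), and
   multiplying the hypothesis by PercentBias^2 = Bias^2 / beta^2 > 0 turns it into
   Var(bs) - Var(bp) <= Bias(bp)^2, i.e. MSE(bs) <= MSE(bp).  The only analytic input missing from the library is that a
   normal variable is integrable with mean m: its positive and negative deviations from m have
   the same integral, by symmetry of the density about m, and that integral is finite by the
   Gaussian bound max(x - m, 0) exp(-(x - m)^2 / (4 s^2)) <= s. *)

Section lebesgue_integral_invariance.
Context {R : realType}.
Local Notation mu := (@lebesgue_measure R).
Local Open Scope ereal_scope.

Lemma ge0_integral_shift (G : R -> R) (c : R) :
  continuous G -> (forall x, 0 <= G x)%R ->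
  \int[mu]_x (G x)%:E = \int[mu]_x (G (x + c))%:E.
Proof.
move=> cG G0; have shift'E : (+%R^~ c)^`()%classic = cst 1%R.
  by apply/funext => x; rewrite derive1E deriveD// derive_id derive_cst addr0.
rewrite (@increasing_ge0_integration_by_substitutionT _ (+%R^~ c)) ?shift'E//.
- by apply: eq_integral => x _; rewrite !fctE mulr1.
- by move=> x y; rewrite ltrD2r.
- exact: cst_continuous.
- exact: is_cvg_cst.
- exact: is_cvg_cst.
- exact: cvg_addrr_Ny.
- exact: cvg_addrr.
Qed.

Lemma ge0_integral_split0 (G : R -> R) : continuous G -> (forall x, 0 <= G x)%R ->
  \int[mu]_x (G x)%:E = \int[mu]_(x in `[0%R, +oo[) (G (- x))%:E
                        + \int[mu]_(x in `[0%R, +oo[) (G x)%:E.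
Proof.
move=> cG G0; have mG : measurable_fun [set: R] G by exact: continuous_measurable_fun.
rewrite -(setUv `[0%R, +oo[%classic) ge0_integral_setU//= ; last 4 first.
- exact: measurableC.
- by apply/measurable_EFinP; rewrite setUv.
- by move=> x _; rewrite lee_fin.
- exact/disj_setPCl.
rewrite addeC setCitvr integral_itv_bndo_bndc; last exact/measurable_EFinP/measurable_funTS.
by rewrite -{1}oppr0 ge0_integration_by_substitutionNy//; exact: continuous_subspaceT.
Qed.

Lemma ge0_integral_opp (G : R -> R) : continuous G -> (forall x, 0 <= G x)%R ->
  \int[mu]_x (G x)%:E = \int[mu]_x (G (- x))%:E.
Proof.
move=> cG G0; have cGN : continuous (G \o -%R).
  by move=> x; apply: continuous_comp; [exact: oppr_continuous|exact: cG].
rewrite ge0_integral_split0//.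
rewrite (ge0_integral_split0 (G \o -%R) cGN (fun x => G0 (- x)%R)) [RHS]addeC.
by under [X in _ = _ + X]eq_integral do rewrite /= opprK.
Qed.

End lebesgue_integral_invariance.

Section normal_prob_integral.
Context {R : realType}.
Local Notation mu := (@lebesgue_measure R).
Local Open Scope ereal_scope.

Lemma ge0_integral_normal_prob (m s : R) (f : R -> \bar R) :
  (forall x, 0 <= f x) -> measurable_fun setT f ->
  \int[normal_prob m s]_x f x = \int[mu]_x (f x * (normal_pdf m s x)%:E).
Proof.
move=> f0 mf; have dom := normal_prob_dominates m s.
rewrite -(Radon_Nikodym_SigmaFinite.change_of_variables dom f0 measurableT mf).
have mpdf : measurable_fun setT (fun x => (normal_pdf m s x)%:E).
  by apply/measurable_EFinP; exact: measurable_normal_pdf.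
apply: ae_eq_integral => //.
- apply: emeasurable_funM => //; apply: (measurable_int mu).
  exact: Radon_Nikodym_SigmaFinite.f_integrable.
- exact: emeasurable_funM.
apply: ae_eqe_mul2l; apply: integral_ae_eq => //.
- exact: Radon_Nikodym_SigmaFinite.f_integrable.
- by move=> E _ mE; rewrite -Radon_Nikodym_SigmaFinite.f_integral.
Qed.

End normal_prob_integral.

Section normal_first_absolute_moment.
Context {R : realType}.
Local Notation mu := (@lebesgue_measure R).
Variables (m s : R).
Hypothesis s_gt0 : 0 < s.

Lemma normal_pdf_reflect x : normal_pdf m s (m + m - x) = normal_pdf m s x.
Proof.
by rewrite /normal_pdf gt_eqF// /normal_fun addrAC addrK -opprB sqrrN.
Qed.

Lemma continuous_max0_mul_normal_pdf (f : R -> R) : continuous f ->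
  continuous (fun x => Num.max (f x) 0 * normal_pdf m s x).
Proof.
move=> cf x; have cmax : continuous (fun x => Num.max (f x) 0).
  by move=> y; apply: continuous_max; [exact: cf|exact: cst_continuous].
exact: continuousM (cmax x) (@continuous_normal_pdf _ m s (lt0r_neq0 s_gt0) x).
Qed.

Let s2 := Num.sqrt 2 * s.
Let s2_gt0 : 0 < s2. Proof. by rewrite mulr_gt0// sqrtr_gt0. Qed.

Lemma normal_fun_sqrt2 x : normal_fun m s x = normal_fun m s2 x ^+ 2.
Proof.
rewrite /normal_fun -expRM_natr; congr expR.
by rewrite /s2 exprMn sqr_sqrtr//; field; rewrite gt_eqF.
Qed.

Lemma max0_mul_normal_fun_sqrt2_le x : Num.max (x - m) 0 * normal_fun m s2 x <= s.
Proof.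
set u := (x - m) ^+ 2 / (s2 ^+ 2 *+ 2).
have u4s2 : u * (s ^+ 2 *+ 4) = (x - m) ^+ 2.
  by rewrite /u /s2 exprMn sqr_sqrtr//; field; rewrite gt_eqF.
have eu_gt0 : 0 < expR u by exact: expR_gt0.
have dev_le : x - m <= s * expR u.
  apply: (le_trans _ (ler_wpM2l (ltW s_gt0) (expR_ge1Dx u))).
  (* x - m <= s + (x - m)^2 / (4 s) by AM-GM *)
  rewrite -subr_ge0 -(pmulr_rge0 _ (_ : 0 < s *+ 4)) ?pmulrn_lgt0//.
  have -> : s *+ 4 * (s * (1 + u) - (x - m)) = (x - m - s *+ 2) ^+ 2 by nra.
  exact: sqr_ge0.
rewrite /normal_fun mulNr -/u expRN ler_pdivrMr// ge_max dev_le andTb.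
by rewrite mulr_ge0// ltW.
Qed.

Local Open Scope ereal_scope.

Lemma integral_max0_mul_normal_pdf_lty :
  \int[mu]_x (Num.max (x - m) 0 * normal_pdf m s x)%:E < +oo.
Proof.
pose c := (s * normal_peak s / normal_peak s2)%R.
have peak_gt0 : (0 < normal_peak s2)%R by rewrite normal_peak_gt0// gt_eqF.
have c_ge0 : (0 <= c)%R by rewrite divr_ge0 ?mulr_ge0 ?normal_peak_ge0// ltW.
have cg : continuous (fun x => Num.max (x - m) 0 * normal_pdf m s x)%R.
  apply: continuous_max0_mul_normal_pdf => x.
  by apply: cvgB; [exact: cvg_id|exact: cvg_cst].
apply: (@le_lt_trans _ _ (\int[mu]_x (c%:E * (normal_pdf m s2 x)%:E))).
  apply: ge0_le_integral => //.
  - by move=> x _; rewrite lee_fin mulr_ge0 ?le_max ?lexx ?orbT ?normal_pdf_ge0.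
  - by apply/measurable_EFinP; exact: continuous_measurable_fun.
  - apply: emeasurable_funM => //.
    by apply/measurable_EFinP; exact: measurable_normal_pdf.
  move=> x _; rewrite -EFinM lee_fin /normal_pdf !gt_eqF// normal_fun_sqrt2.
  set f := normal_fun m s2 x.
  have -> : (c * (normal_peak s2 * f) = normal_peak s * f * s)%R.
    by rewrite /c; field; rewrite gt_eqF.
  rewrite (_ : (_ * (_ * f ^+ 2) = normal_peak s * f * (Num.max (x - m) 0 * f))%R);
    last by ring.
  rewrite ler_wpM2l ?mulr_ge0 ?normal_peak_ge0 ?normal_fun_ge0//.
  exact: max0_mul_normal_fun_sqrt2_le.
rewrite ge0_integralZl//.
- by rewrite integral_normal_pdf mule1 ltry.
- by apply/measurable_EFinP; exact: measurable_normal_pdf.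
- by move=> x _; rewrite lee_fin normal_pdf_ge0.
Qed.

Lemma integral_max0_mul_normal_pdf_sym :
  \int[mu]_x (Num.max (m - x) 0 * normal_pdf m s x)%:E =
  \int[mu]_x (Num.max (x - m) 0 * normal_pdf m s x)%:E.
Proof.
pose g x := (Num.max (m - x) 0 * normal_pdf m s x)%R.
have cg : continuous g.
  apply: continuous_max0_mul_normal_pdf => x.
  by apply: cvgB; [exact: cvg_cst|exact: cvg_id].
have g_ge0 x : (0 <= g x)%R by rewrite mulr_ge0 ?le_max ?lexx ?orbT ?normal_pdf_ge0.
have cgN : continuous (g \o -%R).
  by move=> x; apply: continuous_comp; [exact: oppr_continuous|exact: cg].
rewrite (ge0_integral_opp g cg g_ge0).
rewrite (ge0_integral_shift (g \o -%R) (- (m + m))%R cgN (fun x => g_ge0 _)).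
apply: eq_integral => x _; congr EFin; rewrite /g /=.
have -> : (- (x - (m + m)) = m + m - x)%R by rewrite opprB.
have -> : (m - (m + m - x) = x - m)%R by ring.
by rewrite normal_pdf_reflect.
Qed.

End normal_first_absolute_moment.

Section normal_random_variable.
Context {R : realType} {d} {T : measurableType d} {P : probability T R}.
Local Notation mu := (@lebesgue_measure R).
Context (X : {RV P >-> R}) {m s : R}.
Hypotheses (s_gt0 : 0 < s)
  (X_normal : distribution P X = normal_prob m s :> (set R -> \bar R)).

(* [normal_prob m s] is a measure for the Lebesgue sigma-algebra [measurableTypeR R], not for
   the default one on [R]: integrating against the law of [X] needs [X] with that codomain. *)
Let XL : T -> measurableTypeR R := X.
Let measurable_XL : measurable_fun setT XL. Proof. exact: (measurable_funP X). Qed.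
HB.instance Definition _ := isMeasurableFun.Build _ _ _ _ XL measurable_XL.

Local Open Scope ereal_scope.

Lemma ge0_integral_normal_RV (h : R -> R) :
  measurable_fun setT h -> (forall x, 0 <= h x)%R ->
  \int[P]_w (h (X w))%:E = \int[mu]_x (h x * normal_pdf m s x)%:E.
Proof.
move=> mh h0.
have mEh : measurable_fun (T := measurableTypeR R) setT (EFin \o h).
  exact/measurable_EFinP.
have Eh0 x : 0 <= (EFin \o h) x by rewrite lee_fin.
have XL_normal : distribution P (XL : {RV P >-> measurableTypeR R}) = normal_prob m s.
  exact: X_normal.
rewrite -[LHS](ge0_integral_distribution XL mEh Eh0) XL_normal.
transitivity (\int[mu]_x ((EFin \o h) x * (normal_pdf m s x)%:E)).
  exact: ge0_integral_normal_prob.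
by apply: eq_integral => x _; rewrite -EFinM.
Qed.

Let ge0_Lfun1 (g : T -> R) : measurable_fun setT g -> (forall w, 0 <= g w)%R ->
  'E_P[g] < +oo -> g \in Lfun P 1.
Proof.
rewrite unlock => mg g0 g_lty; apply/Lfun1_integrable/integrableP; split.
  exact/measurable_EFinP.
by under eq_integral do rewrite /= ger0_norm//.
Qed.

Let Xc w := (X w - m)%R.

Let measurable_Xc : measurable_fun setT Xc.
Proof. exact: measurable_funB. Qed.

Let expectation_Xc_pos :
  'E_P[Xc^\+%R] = \int[mu]_x (Num.max (x - m) 0 * normal_pdf m s x)%:E.
Proof.
rewrite unlock; apply: (ge0_integral_normal_RV (fun x => Num.max (x - m) 0)%R).
- by apply: measurable_maxr => //; exact: measurable_funB.
- by move=> x; rewrite le_max lexx orbT.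
Qed.

Let expectation_Xc_neg :
  'E_P[Xc^\-%R] = \int[mu]_x (Num.max (x - m) 0 * normal_pdf m s x)%:E.
Proof.
rewrite -integral_max0_mul_normal_pdf_sym// unlock.
under [RHS]eq_integral do rewrite -opprB.
apply: (ge0_integral_normal_RV (fun x => Num.max (- (x - m)) 0)%R).
- by apply: measurable_maxr => //; apply: measurableT_comp => //; exact: measurable_funB.
- by move=> x; rewrite le_max lexx orbT.
Qed.

Let fin_num_integral_max0_mul_normal_pdf :
  \int[mu]_x (Num.max (x - m) 0 * normal_pdf m s x)%:E \is a fin_num.
Proof.
rewrite ge0_fin_numE ?integral_max0_mul_normal_pdf_lty// integral_ge0// => x _.
by rewrite lee_fin mulr_ge0 ?le_max ?lexx ?orbT ?normal_pdf_ge0.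
Qed.

Let Lfun_Xc_pos : (Xc^\+)%R \in Lfun P 1.
Proof.
apply: ge0_Lfun1; [exact: measurable_funrpos|exact: funrpos_ge0|].
by rewrite expectation_Xc_pos integral_max0_mul_normal_pdf_lty.
Qed.

Let Lfun_Xc_neg : (Xc^\-)%R \in Lfun P 1.
Proof.
apply: ge0_Lfun1; [exact: measurable_funrneg|exact: funrneg_ge0|].
by rewrite expectation_Xc_neg integral_max0_mul_normal_pdf_lty.
Qed.

Let X_split : (X : T -> R) = ((Xc^\+ \- Xc^\-) \+ cst m)%R.
Proof.
apply/funext => w; have /(congr1 (@^~ w)) /= := funrposBneg Xc.
by rewrite !fctE => ->; rewrite /Xc subrK.
Qed.

Lemma normal_Lfun1 : (X : T -> R) \in Lfun P 1.
Proof. by rewrite X_split rpredD ?rpredB ?Lfun_cst. Qed.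

Lemma normal_expectation : 'E_P[X] = m%:E.
Proof.
rewrite X_split expectationD ?rpredB ?Lfun_cst// expectationB//.
by rewrite expectation_cst expectation_Xc_pos expectation_Xc_neg subee ?add0e.
Qed.

End normal_random_variable.

Section gram_matrix.
Context {R : realFieldType}.

Lemma mulmx_trmx_rV (k : nat) (r : 'rV[R]_k) : (r *m r^T) 0 0 = \sum_i r 0 i ^+ 2.
Proof. by rewrite !mxE; apply: eq_bigr => i _; rewrite !mxE expr2. Qed.

Lemma mulmx_trmx_rV_ge0 (k : nat) (r : 'rV[R]_k) : 0 <= (r *m r^T) 0 0.
Proof. by rewrite mulmx_trmx_rV sumr_ge0// => i _; rewrite sqr_ge0. Qed.

Lemma mulmx_trmx_rV_eq0 (k : nat) (r : 'rV[R]_k) : (r *m r^T) 0 0 = 0 -> r = 0.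
Proof.
rewrite mulmx_trmx_rV => r0; apply/matrixP => i j; rewrite (ord1 i) !mxE.
have /eqP := psumr_eq0P (fun j _ => sqr_ge0 (r 0 j)) r0 (i := j) isT.
by rewrite sqrf_eq0 => /eqP.
Qed.

Lemma unitmx_gramD (p n0 n1 : nat) (X0 : 'M[R]_(n0, p)) (X1 : 'M[R]_(n1, p)) (a : R) :
  \rank X1 = p -> 0 <= a -> X1^T *m X1 + a *: (X0^T *m X0) \in unitmx.
Proof.
move=> rkX1 a_ge0; set A := _ + _.
rewrite -row_free_unit -kermx_eq0; apply/eqP/row_matrixP => i; rewrite row0.
set u := row i (kermx A).
have uA : u *m A = 0 by apply/sub_kermxP; exact: row_sub.
have quad : (u *m A) *m u^T =
    (u *m X1^T) *m (u *m X1^T)^T + a *: ((u *m X0^T) *m (u *m X0^T)^T).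
  rewrite /A mulmxDr mulmxDl -scalemxAr scalemxAl !trmx_mul !trmxK !mulmxA.
  by rewrite -!scalemxAl.
have := congr1 (fun M : 'M[R]_1 => M 0 0) quad.
rewrite uA mul0mx mxE [X in _ = X]mxE [X in _ + X]mxE => quad00.
have := mulmx_trmx_rV_ge0 _ (u *m X1^T); have := mulmx_trmx_rV_ge0 _ (u *m X0^T).
move=> uX0_ge0 uX1_ge0.
have /mulmx_trmx_rV_eq0 uX1 : ((u *m X1^T) *m (u *m X1^T)^T) 0 0 = 0 by nra.
apply: (@row_free_inj _ _ _ _ X1^T); first by rewrite /row_free mxrank_tr rkX1.
by rewrite uX1 mul0mx.
Qed.

End gram_matrix.

Section straPP_mean.
Context {R : realType} (p n0 n1 : nat) (X0 : 'M[R]_(n0, p)) (X1 : 'M[R]_(n1, p)).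
Variables (s0 s1 a0 : R).

Lemma beta_sE (y0 : 'cV[R]_n0) (y1 : 'cV[R]_n1) :
  beta_s X0 X1 s0 s1 a0 y0 y1 =
  Sigma_s X0 X1 s1 a0 *m ((s1 ^+ 2)^-1 *: X1^T) *m y1 +
  Sigma_s X0 X1 s1 a0 *m ((a0 / (s0 * s1)) *: X0^T) *m y0.
Proof. by rewrite /beta_s mulmxDr -!mulmxA !scalemxAl. Qed.

Lemma beta_s_scaled_means (b : 'cV[R]_p) : s0 != 0 -> s1 != 0 ->
  X1^T *m X1 + a0 *: (X0^T *m X0) \in unitmx ->
  beta_s X0 X1 s0 s1 a0 (X0 *m ((s0 / s1) *: b)) (X1 *m b) = b.
Proof.
move=> s0_neq0 s1_neq0; set A := _ + _ => A_unit; rewrite /beta_s.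
have -> : (s1 ^+ 2)^-1 *: (X1^T *m (X1 *m b)) +
          (a0 / (s0 * s1)) *: (X0^T *m (X0 *m ((s0 / s1) *: b))) =
          (s1 ^+ 2)^-1 *: (A *m b).
  rewrite /A mulmxDl -!scalemxAr !mulmxA -!scalemxAl scalerDr !scalerA.
  by congr (_ + _ *: _); field; rewrite s0_neq0 s1_neq0.
rewrite /Sigma_s -scalemxAl -scalemxAr scalerA mulfV ?expf_neq0// scale1r.
by rewrite mulmxA mulVmx// mul1mx.
Qed.

End straPP_mean.

Section expectation_linear_estimator.
Context {R : realType} {d} {T : measurableType d} (P : probability T R).
Local Open Scope ereal_scope.

Lemma expectation_mulmx_colRV {k n : nat} (M : 'M[R]_(k, n))
    {Y : 'I_n -> T -> R} {mu : 'cV[R]_n} (j : 'I_k) :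
  (forall i, Y i \in Lfun P 1) -> (forall i, 'E_P[Y i] = (mu i 0)%:E) ->
  (fun w => (M *m colRV Y w) j 0)%R \in Lfun P 1 /\
  'E_P[fun w => (M *m colRV Y w) j 0]%R = ((M *m mu) j 0)%:E.
Proof.
move=> LY EY.
have -> : (fun w => (M *m colRV Y w) j 0)%R = (\sum_i M j i \o* Y i)%R.
  apply/funext => w; rewrite mxE fct_sumE.
  by apply: eq_bigr => i _; rewrite /colRV mxE /= mulrC.
rewrite mxE; elim/big_ind2 : _ => [|f r g q [Lf Ef] [Lg Eg]|i _].
- by split; [exact: rpred0|exact: expectation_cst].
- by split; [exact: rpredD|rewrite expectationD// Ef Eg].
- by split; [exact: Lfun_scale|rewrite expectationZl// EY].
Qed.

Lemma expectation_beta_s {p n0 n1 : nat} (X0 : 'M[R]_(n0, p)) (X1 : 'M[R]_(n1, p))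
    (s0 s1 a0 : R) {Y0 : 'I_n0 -> T -> R} {Y1 : 'I_n1 -> T -> R}
    {mu0 : 'cV[R]_n0} {mu1 : 'cV[R]_n1} (j : 'I_p) :
  (forall i, Y0 i \in Lfun P 1) -> (forall i, 'E_P[Y0 i] = (mu0 i 0)%:E) ->
  (forall i, Y1 i \in Lfun P 1) -> (forall i, 'E_P[Y1 i] = (mu1 i 0)%:E) ->
  'E_P[fun w => beta_s X0 X1 s0 s1 a0 (colRV Y0 w) (colRV Y1 w) j 0]%R =
  (beta_s X0 X1 s0 s1 a0 mu0 mu1 j 0)%:E.
Proof.
move=> LY0 EY0 LY1 EY1.
have [L1 E1] := expectation_mulmx_colRV
  (Sigma_s X0 X1 s1 a0 *m ((s1 ^+ 2)^-1 *: X1^T)) j LY1 EY1.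
have [L0 E0] := expectation_mulmx_colRV
  (Sigma_s X0 X1 s1 a0 *m ((a0 / (s0 * s1)) *: X0^T)) j LY0 EY0.
under eq_fun do rewrite beta_sE mxE.
by rewrite expectationD// E1 E0 beta_sE [in RHS]mxE.
Qed.

End expectation_linear_estimator.

Lemma MSE_le_of_unbiased d (T : measurableType d) (R : realType)
    (P : probability T R) (bs bp : T -> R) (b : R) :
  Bias P bs b = 0 -> b != 0 -> Bias P bp b != 0 ->
  (Var P bs - Var P bp) / PercentBias P bp b ^+ 2 <= b ^+ 2 ->
  MSE P bs b <= MSE P bp b.
Proof.
rewrite /MSE /PercentBias => -> b_neq0; set B := Bias P bp b => B_neq0.
have Bb_gt0 : 0 < (B / b) ^+ 2 by rewrite exprn_even_gt0//= mulf_neq0 ?invr_eq0.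
rewrite ler_pdivrMr// (_ : b ^+ 2 * (B / b) ^+ 2 = B ^+ 2); last by field.
by rewrite expr0n addr0 -lerBlDl.
Qed.

Theorem theorem1 (R : realType) (d : measure_display) (T : measurableType d)
  (P : probability T R) (p n0 n1 : nat)
  (X0 : 'M[R]_(n0, p)) (X1 : 'M[R]_(n1, p)) (sigma0 sigma1 a0 : R)
  (beta0 beta1 : 'cV[R]_p)
  (Y0 : 'I_n0 -> {RV P >-> R}) (Y1 : 'I_n1 -> {RV P >-> R}) (j : 'I_p) :
  (1 <= p)%N -> (1 <= n0)%N -> (1 <= n1)%N ->
  \rank X0 = p -> \rank X1 = p ->
  0 < sigma0 -> 0 < sigma1 -> 0 < a0 -> a0 <= 1 ->
  (* Y0 ~ N_{n0}(X0 beta0, sigma0^2 I), Y1 ~ N_{n1}(X1 beta1, sigma1^2 I),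
     independently: all coordinates are mutually independent normals *)
  (forall i, distribution P (Y0 i) = normal_prob ((X0 *m beta0) i 0) sigma0
     :> (set R -> \bar R)) ->
  (forall i, distribution P (Y1 i) = normal_prob ((X1 *m beta1) i 0) sigma1
     :> (set R -> \bar R)) ->
  mutually_independent P
    (fun k : 'I_n0 + 'I_n1 =>
       match k with inl i => (Y0 i : T -> R) | inr i => (Y1 i : T -> R) end) ->
  beta0 = (sigma0 / sigma1) *: beta1 ->
  let bs := fun w => beta_s X0 X1 sigma0 sigma1 a0
                       (colRV (fun i => (Y0 i : T -> R)) w)
                       (colRV (fun i => (Y1 i : T -> R)) w) j 0 in
  let bp := fun w => beta_p X0 X1 sigma0 sigma1 a0
                       (colRV (fun i => (Y0 i : T -> R)) w)
                       (colRV (fun i => (Y1 i : T -> R)) w) j 0 in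
  let b1j := beta1 j 0 in
  b1j != 0 -> Bias P bp b1j != 0 ->
  (Var P bs - Var P bp) / (PercentBias P bp b1j) ^+ 2 <= b1j ^+ 2 ->
  MSE P bs b1j <= MSE P bp b1j.
Proof.
move=> _ _ _ _ rkX1 s0_gt0 s1_gt0 a0_gt0 _ Y0_normal Y1_normal _ beta0E bs bp b1j.
have LY0 i := normal_Lfun1 (Y0 i) s0_gt0 (Y0_normal i).
have LY1 i := normal_Lfun1 (Y1 i) s1_gt0 (Y1_normal i).
have EY0 i := normal_expectation (Y0 i) s0_gt0 (Y0_normal i).
have EY1 i := normal_expectation (Y1 i) s1_gt0 (Y1_normal i).
have bs_unbiased : Bias P bs b1j = 0.
  rewrite /Bias (expectation_beta_s P X0 X1 sigma0 sigma1 a0 j LY0 EY0 LY1 EY1).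
  rewrite beta0E beta_s_scaled_means ?subrr ?lt0r_neq0//.
  exact: unitmx_gramD (ltW a0_gt0).
exact: MSE_le_of_unbiased.
Qed.
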